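(* Let $H\in\mathbb{R}$, let $U\subset\mathbb{C}$ be an open set containing the closed unit disc $\overline{\mathbb{D}}$, and let $f:U\to\mathbb{R}^3$ be a conformal immersion with constant mean curvature $H$ (with respect to a unit normal field $N$), whose boundary curve $\gamma(t)=f(e^{it})$, $t\in[0,2\pi]$, is a regular real-analytic closed curve. Let $\kappa_n(t)$ and $\tau_g(t)$ be the normal curvature and geodesic torsion of $\gamma$ at $\gamma(t)$, and let $\frac{ds}{dt}=|\gamma'(t)|$, where $s$ is arc length with respect to the metric of $\mathbb{R}^3$. Then \[\int_0^{2\pi}(H-\kappa_n(t))\left(\frac{ds}{dt}\right)^2dt=0\qquad\text{and}\qquad \int_0^{2\pi}\tau_g(t)\left(\frac{ds}{dt}\right)^2dt=0.\] In particular, $H=\frac{1}{M}\int_0^{2\pi}\kappa_n(t)\left(\frac{ds}{dt}\right)^2dt$, where $M=\int_0^{2\pi}\left(\frac{ds}{dt}\right)^2dt$.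
   Context: Conformal means $\langle f_x,f_x\rangle=\langle f_y,f_y\rangle>0$ and $\langle f_x,f_y\rangle=0$ for $z=x+iy$; mean curvature $H=\frac12\nu^{-2}\langle f_{xx}+f_{yy},N\rangle$ with $\nu^2=\langle f_x,f_x\rangle$. Along the boundary curve, with $X=d\gamma/ds$ the unit tangent, $N$ the surface unit normal restricted to $\gamma$, and $Y=N\times X$, the normal curvature is $\kappa_n=\langle dX/ds,N\rangle$ and the geodesic torsion is $\tau_g=\langle dY/ds,N\rangle$. The parameter $t$ is the one for which $z=e^{it}$ is the restriction of the conformal coordinate $z$ of $f$ to $\partial\mathbb{D}$. *)

From Stdlib Require Import Reals.
From Coquelicot Require Import Coquelicot.
Open Scope R_scope.

Definition V3 : Type := (R * R * R)%type.
Definition v1 (v : V3) : R := fst (fst v).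
Definition v2 (v : V3) : R := snd (fst v).
Definition v3 (v : V3) : R := snd v.
Definition mk3 (a b c : R) : V3 := (a, b, c).
Definition vadd (u v : V3) : V3 := mk3 (v1 u + v1 v) (v2 u + v2 v) (v3 u + v3 v).
Definition vscal (k : R) (v : V3) : V3 := mk3 (k * v1 v) (k * v2 v) (k * v3 v).
Definition dot (u v : V3) : R := v1 u * v1 v + v2 u * v2 v + v3 u * v3 v.
Definition vnorm (v : V3) : R := sqrt (dot v v).
Definition cross (u v : V3) : V3 :=
  mk3 (v2 u * v3 v - v3 u * v2 v)
      (v3 u * v1 v - v1 u * v3 v)
      (v1 u * v2 v - v2 u * v1 v).

Definition dV (c : R -> V3) (t : R) : V3 :=
  mk3 (Derive (fun s => v1 (c s)) t)
      (Derive (fun s => v2 (c s)) t)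
      (Derive (fun s => v3 (c s)) t).

Definition Dp (b : bool) (g : R -> R -> R) : R -> R -> R :=
  fun x y => if b then Derive (fun t => g t y) x else Derive (fun t => g x t) y.
Definition Dlist (l : list bool) (g : R -> R -> R) : R -> R -> R :=
  List.fold_right Dp g l.

Definition smooth_on (U : R -> R -> Prop) (g : R -> R -> R) : Prop :=
  forall (l : list bool) (x y : R), U x y ->
    ex_derive (fun t => Dlist l g t y) x /\
    ex_derive (fun t => Dlist l g x t) y /\
    continuous (fun p : R * R => Dlist l g (fst p) (snd p)) (x, y).

Definition smooth3_on (U : R -> R -> Prop) (F : R -> R -> V3) : Prop :=
  smooth_on U (fun x y => v1 (F x y)) /\
  smooth_on U (fun x y => v2 (F x y)) /\
  smooth_on U (fun x y => v3 (F x y)).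

Definition pdx (F : R -> R -> V3) : R -> R -> V3 := fun x y =>
  mk3 (Derive (fun t => v1 (F t y)) x)
      (Derive (fun t => v2 (F t y)) x)
      (Derive (fun t => v3 (F t y)) x).
Definition pdy (F : R -> R -> V3) : R -> R -> V3 := fun x y =>
  mk3 (Derive (fun t => v1 (F x t)) y)
      (Derive (fun t => v2 (F x t)) y)
      (Derive (fun t => v3 (F x t)) y).

Definition open_set2 (U : R -> R -> Prop) : Prop :=
  open (fun p : R * R => U (fst p) (snd p)).
Definition contains_closed_disc (U : R -> R -> Prop) : Prop :=
  forall x y, x ^ 2 + y ^ 2 <= 1 -> U x y.

Definition conformal_immersion_on (U : R -> R -> Prop) (f : R -> R -> V3) : Prop :=
  smooth3_on U f /\
  forall x y, U x y ->
    dot (pdx f x y) (pdx f x y) = dot (pdy f x y) (pdy f x y) /\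
    0 < dot (pdx f x y) (pdx f x y) /\
    dot (pdx f x y) (pdy f x y) = 0.

Definition unit_normal_on (U : R -> R -> Prop) (f N : R -> R -> V3) : Prop :=
  smooth3_on U N /\
  forall x y, U x y ->
    dot (N x y) (N x y) = 1 /\
    dot (N x y) (pdx f x y) = 0 /\
    dot (N x y) (pdy f x y) = 0.

Definition mean_curvature (f N : R -> R -> V3) (x y : R) : R :=
  / 2 * / dot (pdx f x y) (pdx f x y) *
  dot (vadd (pdx (pdx f) x y) (pdy (pdy f) x y)) (N x y).

Definition has_constant_mean_curvature_on (U : R -> R -> Prop)
  (f N : R -> R -> V3) (H : R) : Prop :=
  forall x y, U x y -> mean_curvature f N x y = H.

Definition real_analytic (g : R -> R) : Prop :=
  forall t0 : R, exists (r : R) (a : nat -> R), 0 < r /\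
    forall t, Rabs (t - t0) < r -> is_pseries a (t - t0) (g t).

Definition bcurve (f : R -> R -> V3) (t : R) : V3 := f (cos t) (sin t).
Definition bnormal (N : R -> R -> V3) (t : R) : V3 := N (cos t) (sin t).

Definition regular_analytic_curve (c : R -> V3) : Prop :=
  real_analytic (fun t => v1 (c t)) /\
  real_analytic (fun t => v2 (c t)) /\
  real_analytic (fun t => v3 (c t)) /\
  forall t, dV c t <> mk3 0 0 0.

Definition dsdt (f : R -> R -> V3) (t : R) : R := vnorm (dV (bcurve f) t).
Definition tangentX (f : R -> R -> V3) (t : R) : V3 :=
  vscal (/ dsdt f t) (dV (bcurve f) t).
Definition conormalY (f N : R -> R -> V3) (t : R) : V3 :=
  cross (bnormal N t) (tangentX f t).
(* kappa_n = <dX/ds, N>, with d/ds = (dt/ds) d/dt *)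
Definition normal_curvature (f N : R -> R -> V3) (t : R) : R :=
  / dsdt f t * dot (dV (tangentX f) t) (bnormal N t).
Definition geodesic_torsion (f N : R -> R -> V3) (t : R) : R :=
  / dsdt f t * dot (dV (conormalY f N) t) (bnormal N t).

From Stdlib Require Import Reals Lra Psatz List FunctionalExtensionality.
From Coquelicot Require Import Coquelicot.
Open Scope R_scope.

(* Write u = (<f_xx, N> - <f_yy, N>)/2 and v = <f_xy, N>.  Differentiating the
   conformality relations, |N| = 1, N ⊥ f_x, f_y and the CMC equation
   <f_xx + f_yy, N> = 2H|f_x|^2, and expanding in the orthogonal frame (f_x, f_y, N),
   the Codazzi equations become u_x = -v_y, u_y = v_x: the Hopf differential
   (u - i v) dz^2 is holomorphic.  So is A + iB := z^2 (u - i v), which vanishes at 0;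
   the circle means of A and B therefore vanish, because d/dr of the mean of A over
   |z| = r is (1/r) times the integral of d/dt B(r e^{it}), which is 0.  On the unit
   circle, γ' = -sin t f_x + cos t f_y gives (H - κ_n)(ds/dt)^2 = A(e^{it}) and
   τ_g (ds/dt)^2 = ±B(e^{it}), the sign being the constant orientation of N
   relative to f_x × f_y. *)

(** * Differential calculus in two variables *)

Lemma DL_pol_1 g x y dx dy :
  DL_pol 1 g x y dx dy =
  g x y + dx * Derive (fun t => g t y) x + dy * Derive (fun t => g x t) y.
Proof.
  unfold DL_pol, differential; simpl; unfold Binomial.C, partial_derive; simpl; field.
Qed.

Lemma differentiable_pt_lim_eq f x y a b a' b' :
  differentiable_pt_lim f x y a b -> a = a' -> b = b' ->
  differentiable_pt_lim f x y a' b'.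
Proof. now intros Hf <- <-. Qed.

Lemma differentiable_pt_lim_ext_all f g x y a b :
  (forall u v, f u v = g u v) ->
  differentiable_pt_lim f x y a b -> differentiable_pt_lim g x y a b.
Proof. intros E. apply differentiable_pt_lim_ext, locally_2d_forall; auto. Qed.

Lemma differentiable_pt_lim_affine a b c x y :
  differentiable_pt_lim (fun u v => a * u + b * v + c) x y a b.
Proof.
  intros eps; exists eps; intros u v _ _.
  replace (_ - _ - _) with 0 by ring. rewrite Rabs_R0.
  apply Rmult_le_pos; [apply Rlt_le, cond_pos|].
  apply Rle_trans with (Rabs (u - x)); [apply Rabs_pos | apply Rmax_l].
Qed.

Lemma differentiable_pt_lim_const c x y :
  differentiable_pt_lim (fun _ _ => c) x y 0 0.
Proof.
  apply differentiable_pt_lim_ext_all with (2 := differentiable_pt_lim_affine 0 0 c x y).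
  intros; ring.
Qed.

Lemma differentiable_pt_lim_id1 x y : differentiable_pt_lim (fun u _ => u) x y 1 0.
Proof.
  apply differentiable_pt_lim_ext_all with (2 := differentiable_pt_lim_affine 1 0 0 x y).
  intros; ring.
Qed.

Lemma differentiable_pt_lim_id2 x y : differentiable_pt_lim (fun _ v => v) x y 0 1.
Proof.
  apply differentiable_pt_lim_ext_all with (2 := differentiable_pt_lim_affine 0 1 0 x y).
  intros; ring.
Qed.

Lemma differentiable_pt_lim_Rmult a b :
  differentiable_pt_lim (fun u v => u * v) a b b a.
Proof.
  intros eps; exists eps; intros u v Hu Hv.
  replace (_ - _ - _) with ((u - a) * (v - b)) by ring.
  rewrite Rabs_mult.
  pose proof (Rmax_l (Rabs (u - a)) (Rabs (v - b))).
  pose proof (Rmax_r (Rabs (u - a)) (Rabs (v - b))).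
  pose proof (Rabs_pos (u - a)); pose proof (Rabs_pos (v - b)); pose proof (cond_pos eps).
  change (Rabs (v - b) < eps) in Hv. nra.
Qed.

Lemma differentiable_pt_lim_plus f g x y fx fy gx gy :
  differentiable_pt_lim f x y fx fy -> differentiable_pt_lim g x y gx gy ->
  differentiable_pt_lim (fun u v => f u v + g u v) x y (fx + gx) (fy + gy).
Proof.
  intros Hf Hg.
  eapply differentiable_pt_lim_eq;
    [apply (differentiable_pt_lim_comp (fun a b => a + b) f g x y 1 1); [|exact Hf|exact Hg]| |];
    [|ring|ring].
  apply differentiable_pt_lim_ext_all with (2 := differentiable_pt_lim_affine 1 1 0 _ _).
  intros; ring.
Qed.

Lemma differentiable_pt_lim_mult f g x y fx fy gx gy :
  differentiable_pt_lim f x y fx fy -> differentiable_pt_lim g x y gx gy ->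
  differentiable_pt_lim (fun u v => f u v * g u v) x y
    (fx * g x y + f x y * gx) (fy * g x y + f x y * gy).
Proof.
  intros Hf Hg.
  eapply differentiable_pt_lim_eq;
    [apply (differentiable_pt_lim_comp (fun a b => a * b) f g x y (g x y) (f x y));
      [apply differentiable_pt_lim_Rmult|exact Hf|exact Hg]| |]; ring.
Qed.

Lemma differentiable_pt_lim_scal c f x y fx fy :
  differentiable_pt_lim f x y fx fy ->
  differentiable_pt_lim (fun u v => c * f u v) x y (c * fx) (c * fy).
Proof.
  intros Hf.
  eapply differentiable_pt_lim_eq;
    [apply differentiable_pt_lim_mult; [apply differentiable_pt_lim_const|exact Hf]| |];
    cbv beta; ring.
Qed.

Lemma differentiable_pt_lim_opp f x y fx fy :
  differentiable_pt_lim f x y fx fy ->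
  differentiable_pt_lim (fun u v => - f u v) x y (- fx) (- fy).
Proof.
  intros Hf.
  apply differentiable_pt_lim_ext_all with (fun u v => (-1) * f u v); [intros; ring|].
  eapply differentiable_pt_lim_eq; [apply differentiable_pt_lim_scal, Hf| |]; ring.
Qed.

Lemma differentiable_pt_lim_minus f g x y fx fy gx gy :
  differentiable_pt_lim f x y fx fy -> differentiable_pt_lim g x y gx gy ->
  differentiable_pt_lim (fun u v => f u v - g u v) x y (fx - gx) (fy - gy).
Proof.
  intros Hf Hg.
  apply differentiable_pt_lim_ext_all with (fun u v => f u v + (-1) * g u v);
    [intros; ring|].
  eapply differentiable_pt_lim_eq;
    [apply differentiable_pt_lim_plus; [exact Hf|apply differentiable_pt_lim_scal, Hg]| |];
    ring.
Qed.

Lemma continuity_2d_pt_comp g p q x y :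
  continuity_2d_pt g (p x y) (q x y) -> continuity_2d_pt p x y ->
  continuity_2d_pt q x y ->
  continuity_2d_pt (fun x y => g (p x y) (q x y)) x y.
Proof.
  intros Hg Hp Hq eps.
  destruct (Hg eps) as [d Hd].
  apply locally_2d_impl with (2 := locally_2d_and _ _ _ _ (Hp d) (Hq d)).
  apply locally_2d_forall. intros u v [H1 H2]. apply Hd; auto.
Qed.

Lemma continuous_comp_continuity_2d g (p q : R -> R) t :
  continuity_2d_pt g (p t) (q t) -> continuous p t -> continuous q t ->
  continuous (fun s => g (p s) (q s)) t.
Proof.
  intros Hg Hp Hq. apply (continuous_comp_2 p q g t Hp Hq).
  exact (proj1 (continuity_2d_pt_filterlim g _ _) Hg).
Qed.

Lemma continuous_continuity_2d_pt_y h x y :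
  continuity_2d_pt h x y -> continuous (fun t => h x t) y.
Proof.
  intros Hh. apply (continuous_comp_continuity_2d h (fun _ => x) (fun t => t));
    [exact Hh | apply continuous_const | apply continuous_id].
Qed.

Lemma continuity_2d_pt_polar_cos r t : continuity_2d_pt (fun r t => r * cos t) r t.
Proof.
  apply continuity_2d_pt_mult; [apply continuity_2d_pt_id1|].
  apply (continuity_1d_2d_pt_comp cos (fun _ v => v)), continuity_2d_pt_id2.
  apply continuity_cos.
Qed.

Lemma continuity_2d_pt_polar_sin r t : continuity_2d_pt (fun r t => r * sin t) r t.
Proof.
  apply continuity_2d_pt_mult; [apply continuity_2d_pt_id1|].
  apply (continuity_1d_2d_pt_comp sin (fun _ v => v)), continuity_2d_pt_id2.
  apply continuity_sin.
Qed.

Section SmoothFunctions.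
Variable U : R -> R -> Prop.
Hypothesis HU : open_set2 U.

Lemma open_set2_locally_2d x y : U x y -> locally_2d U x y.
Proof. intros Hxy. apply locally_2d_locally, (HU (x, y)), Hxy. Qed.

Lemma smooth_on_Dp b g : smooth_on U g -> smooth_on U (Dp b g).
Proof.
  intros Hg l x y Hxy. specialize (Hg (l ++ b :: nil) x y Hxy).
  unfold Dlist in *. rewrite fold_right_app in Hg. exact Hg.
Qed.

Lemma smooth_on_ex_derive_x g x y : smooth_on U g -> U x y -> ex_derive (fun t => g t y) x.
Proof. intros Hg Hxy. exact (proj1 (Hg nil x y Hxy)). Qed.

Lemma smooth_on_ex_derive_y g x y : smooth_on U g -> U x y -> ex_derive (fun t => g x t) y.
Proof. intros Hg Hxy. exact (proj1 (proj2 (Hg nil x y Hxy))). Qed.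

Lemma smooth_on_continuity_2d g x y : smooth_on U g -> U x y -> continuity_2d_pt g x y.
Proof.
  intros Hg Hxy. apply continuity_2d_pt_filterlim.
  exact (proj2 (proj2 (Hg nil x y Hxy))).
Qed.

Lemma smooth_on_ex_diff_2 g x y : smooth_on U g -> U x y -> ex_diff_n g 2 x y.
Proof.
  intros Hg Hxy.
  pose proof (smooth_on_Dp true g Hg) as Hx.
  pose proof (smooth_on_Dp false g Hg) as Hy.
  pose proof (smooth_on_Dp true _ Hx) as Hxx.
  pose proof (smooth_on_Dp false _ Hx) as Hxy'.
  pose proof (smooth_on_Dp true _ Hy) as Hyx.
  pose proof (smooth_on_Dp false _ Hy) as Hyy.
  simpl; repeat split.
  - exact (smooth_on_continuity_2d _ _ _ Hg Hxy).
  - exact (smooth_on_ex_derive_x _ _ _ Hg Hxy).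
  - exact (smooth_on_ex_derive_y _ _ _ Hg Hxy).
  - exact (smooth_on_continuity_2d _ _ _ Hx Hxy).
  - exact (smooth_on_ex_derive_x _ _ _ Hx Hxy).
  - exact (smooth_on_ex_derive_y _ _ _ Hx Hxy).
  - exact (smooth_on_continuity_2d _ _ _ Hxx Hxy).
  - exact (smooth_on_continuity_2d _ _ _ Hxy' Hxy).
  - exact (smooth_on_continuity_2d _ _ _ Hy Hxy).
  - exact (smooth_on_ex_derive_x _ _ _ Hy Hxy).
  - exact (smooth_on_ex_derive_y _ _ _ Hy Hxy).
  - exact (smooth_on_continuity_2d _ _ _ Hyx Hxy).
  - exact (smooth_on_continuity_2d _ _ _ Hyy Hxy).
Qed.

(* Second-order Taylor–Lagrange bound: the remainder is O(|h|^2). *)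
Lemma smooth_on_differentiable g x y : smooth_on U g -> U x y ->
  differentiable_pt_lim g x y (Dp true g x y) (Dp false g x y).
Proof.
  intros Hg Hxy.
  assert (Hl : locally_2d (fun u v => ex_diff_n g 2 u v) x y).
  { apply locally_2d_impl with (2 := open_set2_locally_2d x y Hxy).
    apply locally_2d_forall. intros u v Huv. apply smooth_on_ex_diff_2; auto. }
  destruct (Taylor_Lagrange_2d g 1 x y Hl) as [D HD].
  intros eps.
  set (d := eps / (Rabs D + 1)).
  assert (Hd : 0 < d).
  { apply Rdiv_lt_0_compat; [apply cond_pos | pose proof (Rabs_pos D); lra]. }
  assert (HDd : Rabs D * d <= eps).
  { unfold d, Rdiv. pose proof (Rabs_pos D); pose proof (cond_pos eps).
    assert (0 < / (Rabs D + 1)) by (apply Rinv_0_lt_compat; lra).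
    assert ((Rabs D + 1) * / (Rabs D + 1) = 1) by (apply Rinv_r; lra).
    nra. }
  apply locally_2d_impl with (2 := HD).
  apply locally_2d_locally. exists (mkposreal d Hd).
  intros [u v] [Hu Hv] Htaylor. simpl in Htaylor |- *.
  rewrite DL_pol_1 in Htaylor.
  change (Rabs (u - x) < d) in Hu. change (Rabs (v - y) < d) in Hv.
  set (m := Rmax (Rabs (u - x)) (Rabs (v - y))) in *.
  assert (Hm0 : 0 <= m) by (apply Rle_trans with (Rabs (u - x)); [apply Rabs_pos|apply Rmax_l]).
  assert (Hmd : m <= d) by (apply Rmax_lub; lra).
  match goal with |- Rabs ?a <= _ => replace a with
     (g u v - (g x y + (u - x) * Derive (fun t => g t y) x
                     + (v - y) * Derive (fun t => g x t) y)) by (unfold Dp; ring) end.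
  apply Rle_trans with (1 := Htaylor).
  pose proof (Rabs_pos D); pose proof (Rle_abs D).
  assert (Rabs D * m <= eps) by nra.
  assert (D * m <= eps) by nra.
  nra.
Qed.

Lemma smooth_on_is_derive_comp g p q t p' q' : smooth_on U g -> U (p t) (q t) ->
  is_derive p t p' -> is_derive q t q' ->
  is_derive (fun s => g (p s) (q s)) t
    (Dp true g (p t) (q t) * p' + Dp false g (p t) (q t) * q').
Proof.
  intros Hg Hpq Hp Hq. apply is_derive_Reals, derivable_pt_lim_comp_2d.
  - apply smooth_on_differentiable; auto.
  - apply is_derive_Reals; auto.
  - apply is_derive_Reals; auto.
Qed.

Lemma smooth_on_Dp_comm g x y : smooth_on U g -> U x y ->
  Dp true (Dp false g) x y = Dp false (Dp true g) x y.
Proof.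
  intros Hg Hxy.
  pose proof (smooth_on_Dp true g Hg) as Hx.
  pose proof (smooth_on_Dp false g Hg) as Hy.
  apply Schwarz.
  - apply locally_2d_impl with (2 := open_set2_locally_2d x y Hxy).
    apply locally_2d_forall. intros u v Huv. repeat split.
    + exact (smooth_on_ex_derive_x _ _ _ Hg Huv).
    + exact (smooth_on_ex_derive_y _ _ _ Hg Huv).
    + exact (smooth_on_ex_derive_x _ _ _ Hy Huv).
    + exact (smooth_on_ex_derive_y _ _ _ Hx Huv).
  - exact (smooth_on_continuity_2d _ _ _ (smooth_on_Dp true _ Hy) Hxy).
  - exact (smooth_on_continuity_2d _ _ _ (smooth_on_Dp false _ Hx) Hxy).
Qed.

Lemma differentiable_pt_lim_locally_const g c x y a b :
  (forall u v, U u v -> g u v = c) -> U x y ->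
  differentiable_pt_lim g x y a b -> a = 0 /\ b = 0.
Proof.
  intros Hc Hxy Hd. destruct (differentiable_pt_lim_unique _ _ _ _ _ Hd) as [<- <-].
  assert (Hl : locally_2d (fun u v => g u v = c) x y).
  { apply locally_2d_impl with (2 := open_set2_locally_2d x y Hxy).
    apply locally_2d_forall; auto. }
  split; rewrite (Derive_ext_loc _ (fun _ => c)); try apply Derive_const.
  - exact (locally_2d_1d_const_y _ _ _ Hl).
  - exact (locally_2d_1d_const_x _ _ _ Hl).
Qed.

End SmoothFunctions.

(** * Circle means of Cauchy–Riemann pairs *)

Lemma polar_sq r t : (r * cos t) ^ 2 + (r * sin t) ^ 2 = r ^ 2.
Proof. pose proof (sin2_cos2 t) as H. unfold Rsqr in H. nra. Qed.

Lemma polar_in_unit_disc r t : Rabs r < 1 -> (r * cos t) ^ 2 + (r * sin t) ^ 2 < 1.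
Proof.
  intros Hr. rewrite polar_sq, <- (Rabs_pos_eq (r ^ 2)), <- RPow_abs by apply pow2_ge_0. pose proof (Rabs_pos r). nra.
Qed.

Lemma Rabs_eq_0_of_le_all (a c : R) : 0 < c -> (forall eps : posreal, Rabs a <= c * eps) -> a = 0.
Proof.
  intros Hc Ha. destruct (Req_dec a 0) as [|Hne]; auto. exfalso.
  assert (He : 0 < Rabs a / (2 * c)) by (apply Rdiv_lt_0_compat; [apply Rabs_pos_lt|]; lra).
  specialize (Ha (mkposreal _ He)); simpl in Ha.
  replace (c * (Rabs a / (2 * c))) with (Rabs a / 2) in Ha by (field; lra).
  pose proof (Rabs_pos_lt _ Hne). lra.
Qed.

Section CauchyRiemannCircleMean.
Variables A Ax Ay B : R -> R -> R.
Hypothesis A_diff : forall x y, x ^ 2 + y ^ 2 < 1 ->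
  differentiable_pt_lim A x y (Ax x y) (Ay x y).
Hypothesis B_diff : forall x y, x ^ 2 + y ^ 2 < 1 ->
  differentiable_pt_lim B x y (- Ay x y) (Ax x y).
Hypothesis A_cont : forall x y, x ^ 2 + y ^ 2 <= 1 -> continuity_2d_pt A x y.
Hypothesis Ax_cont : forall x y, x ^ 2 + y ^ 2 < 1 -> continuity_2d_pt Ax x y.
Hypothesis Ay_cont : forall x y, x ^ 2 + y ^ 2 < 1 -> continuity_2d_pt Ay x y.
Hypothesis A_0 : A 0 0 = 0.

Let A_polar r t := A (r * cos t) (r * sin t).
Let radial_derivative r t :=
  cos t * Ax (r * cos t) (r * sin t) + sin t * Ay (r * cos t) (r * sin t).
Let circle_mean r := RInt (A_polar r) 0 (2 * PI).

Lemma is_derive_A_polar_r r t : Rabs r < 1 ->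
  is_derive (fun s => A_polar s t) r (radial_derivative r t).
Proof.
  intros Hr. apply is_derive_Reals.
  replace (radial_derivative r t) with (Ax (r * cos t) (r * sin t) * cos t
                                         + Ay (r * cos t) (r * sin t) * sin t)
    by (unfold radial_derivative; ring).
  unfold A_polar. apply derivable_pt_lim_comp_2d.
  - apply A_diff, polar_in_unit_disc, Hr.
  - apply is_derive_Reals. auto_derive; auto; ring.
  - apply is_derive_Reals. auto_derive; auto; ring.
Qed.

(* The Cauchy–Riemann equations turn the angular derivative of B into r times
   the radial derivative of A. *)
Lemma is_derive_B_polar_t r t : Rabs r < 1 ->
  is_derive (fun s => B (r * cos s) (r * sin s)) t (r * radial_derivative r t).
Proof.
  intros Hr. apply is_derive_Reals.
  replace (r * radial_derivative r t) with
    (- Ay (r * cos t) (r * sin t) * (- r * sin t) + Ax (r * cos t) (r * sin t) * (r * cos t))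
    by (unfold radial_derivative; ring).
  apply derivable_pt_lim_comp_2d.
  - apply B_diff, polar_in_unit_disc, Hr.
  - apply is_derive_Reals. auto_derive; auto; ring.
  - apply is_derive_Reals. auto_derive; auto; ring.
Qed.

Lemma continuity_2d_radial_derivative r t : Rabs r < 1 ->
  continuity_2d_pt radial_derivative r t.
Proof.
  intros Hr. unfold radial_derivative.
  pose proof (continuity_2d_pt_polar_cos r t). pose proof (continuity_2d_pt_polar_sin r t).
  apply continuity_2d_pt_plus; apply continuity_2d_pt_mult.
  - apply (continuity_1d_2d_pt_comp cos (fun _ v => v)), continuity_2d_pt_id2.
    apply continuity_cos.
  - apply (continuity_2d_pt_comp Ax); auto. apply Ax_cont, polar_in_unit_disc, Hr.
  - apply (continuity_1d_2d_pt_comp sin (fun _ v => v)), continuity_2d_pt_id2.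
    apply continuity_sin.
  - apply (continuity_2d_pt_comp Ay); auto. apply Ay_cont, polar_in_unit_disc, Hr.
Qed.

Lemma continuous_A_polar r t : Rabs r <= 1 -> continuous (A_polar r) t.
Proof.
  intros Hr. apply (continuous_comp_continuity_2d A (fun s => r * cos s) (fun s => r * sin s)).
  - apply A_cont. rewrite polar_sq, <- (Rabs_pos_eq (r ^ 2)), <- RPow_abs by apply pow2_ge_0. pose proof (Rabs_pos r). nra.
  - apply (ex_derive_continuous (fun s => r * cos s)); auto_derive; auto.
  - apply (ex_derive_continuous (fun s => r * sin s)); auto_derive; auto.
Qed.

Lemma is_derive_circle_mean r : Rabs r < 1 ->
  is_derive circle_mean r (RInt (radial_derivative r) 0 (2 * PI)).
Proof.
  intros Hr.
  set (d := mkposreal ((1 - Rabs r) / 2) ltac:(simpl; lra)).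
  assert (Hnear : forall s, Rabs (s - r) < d -> Rabs s < 1).
  { intros s Hs. pose proof (Rabs_triang (s - r) r). simpl in Hs.
    replace (s - r + r) with s in * by ring. lra. }
  replace (RInt (radial_derivative r) 0 (2 * PI))
    with (RInt (fun t => Derive (fun s => A_polar s t) r) 0 (2 * PI)).
  2:{ apply RInt_ext. intros t _. apply is_derive_unique, is_derive_A_polar_r, Hr. }
  apply (is_derive_RInt_param A_polar).
  - exists d. intros s Hs t _. eexists. apply is_derive_A_polar_r, Hnear, Hs.
  - intros t _. apply continuity_2d_pt_ext_loc with radial_derivative;
      [|apply continuity_2d_radial_derivative, Hr].
    exists d. intros u v Hu _. symmetry.
    apply is_derive_unique, is_derive_A_polar_r, Hnear, Hu.
  - exists d. intros s Hs.
    apply (ex_RInt_continuous (V := R_CompleteNormedModule)). intros t _.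
    apply continuous_A_polar, Rlt_le, Hnear, Hs.
Qed.

Lemma continuous_radial_derivative r t : Rabs r < 1 ->
  continuous (radial_derivative r) t.
Proof.
  intros Hr. apply continuous_continuity_2d_pt_y, continuity_2d_radial_derivative, Hr.
Qed.

Lemma RInt_radial_derivative r : 0 < r < 1 -> RInt (radial_derivative r) 0 (2 * PI) = 0.
Proof.
  intros Hr. assert (Hr' : Rabs r < 1) by (rewrite Rabs_pos_eq; lra).
  set (B_polar := fun s => B (r * cos s) (r * sin s)).
  transitivity (RInt (fun s => scal (/ r) (Derive B_polar s)) 0 (2 * PI)).
  { apply RInt_ext. intros t _.
    rewrite (is_derive_unique B_polar t _ (is_derive_B_polar_t r t Hr')).
    unfold scal; simpl; unfold mult; simpl. field. lra. }
  assert (HB' : forall t, continuous (Derive B_polar) t).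
  { intros t. apply continuous_ext with (fun s => r * radial_derivative r s).
    - intros s. symmetry. apply is_derive_unique, is_derive_B_polar_t, Hr'.
    - apply (continuous_scal_r (K := R_AbsRing) (V := R_NormedModule) r).
      apply continuous_radial_derivative, Hr'. }
  rewrite (RInt_scal (V := R_CompleteNormedModule)).
  2:{ apply (ex_RInt_continuous (V := R_CompleteNormedModule)); auto. }
  rewrite RInt_Derive; auto.
  - unfold B_polar. rewrite cos_2PI, sin_2PI, cos_0, sin_0.
    unfold scal; simpl; unfold mult; simpl. ring.
  - intros t _. eexists. apply is_derive_B_polar_t, Hr'.
Qed.

Lemma circle_mean_inside r : 0 < r < 1 -> circle_mean r = 0.
Proof.
  intros Hr.
  assert (Hmean0 : circle_mean 0 = 0).
  { unfold circle_mean, A_polar.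
    rewrite (RInt_ext _ (fun _ => 0)), RInt_const.
    - unfold scal; simpl; unfold mult; simpl. ring.
    - intros t _. rewrite !Rmult_0_l. exact A_0. }
  destruct (MVT_gen circle_mean 0 r (fun _ => 0)) as [c [_ Hc]].
  - intros s Hs. rewrite Rmin_left, Rmax_right in Hs by lra.
    rewrite <- (RInt_radial_derivative s) by lra.
    apply is_derive_circle_mean. rewrite Rabs_pos_eq; lra.
  - intros s Hs. rewrite Rmin_left, Rmax_right in Hs by lra.
    apply continuity_pt_filterlim.
    apply (ex_derive_continuous (K := R_AbsRing) (V := R_NormedModule)).
    eexists. apply is_derive_circle_mean. apply Rabs_def1; lra.
  - lra.
Qed.

Lemma circle_mean_close_to_boundary (eps : posreal) :
  exists r, 0 < r < 1 /\ Rabs (circle_mean 1 - circle_mean r) <= 2 * PI * eps.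
Proof.
  destruct (uniform_continuity_2d A_polar 0 1 0 (2 * PI)) with (eps := eps) as [d Hd].
  { intros r t Hr _. apply (continuity_2d_pt_comp A);
      [|apply continuity_2d_pt_polar_cos | apply continuity_2d_pt_polar_sin].
    apply A_cont. rewrite polar_sq. nra. }
  set (r := Rmax (1 / 2) (1 - d / 2)).
  pose proof (cond_pos d).
  assert (Hr : 1 / 2 <= r /\ 1 - d / 2 <= r /\ r < 1).
  { split; [apply Rmax_l|split; [apply Rmax_r|apply Rmax_lub_lt; lra]]. }
  exists r. split; [lra|].
  assert (Hr1 : Rabs r <= 1) by (rewrite Rabs_pos_eq; lra).
  assert (H11 : Rabs 1 <= 1) by (rewrite Rabs_R1; lra).
  unfold circle_mean.
  rewrite <- (RInt_minus (V := R_CompleteNormedModule));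
    try (apply (ex_RInt_continuous (V := R_CompleteNormedModule));
         intros t _; apply continuous_A_polar; assumption).
  replace (2 * PI * eps) with ((2 * PI - 0) * eps) by ring.
  apply abs_RInt_le_const; [pose proof PI_RGT_0; lra| |].
  - apply (ex_RInt_continuous (V := R_CompleteNormedModule)); intros t _.
    apply (continuous_minus (V := R_NormedModule)); apply continuous_A_polar; assumption.
  - intros t Ht. apply Rlt_le. rewrite Rabs_minus_sym.
    apply Hd; try lra.
    + rewrite Rabs_left1; lra.
    + rewrite Rminus_diag, Rabs_R0. apply cond_pos.
Qed.

Lemma RInt_circle_cauchy_riemann : RInt (fun t => A (cos t) (sin t)) 0 (2 * PI) = 0.
Proof.
  transitivity (circle_mean 1).
  { apply RInt_ext. intros t _. unfold A_polar. rewrite !Rmult_1_l. reflexivity. }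
  apply (Rabs_eq_0_of_le_all _ (2 * PI)); [pose proof PI_RGT_0; lra|].
  intros eps. destruct (circle_mean_close_to_boundary eps) as [r [Hr Hclose]].
  rewrite (circle_mean_inside r Hr), Rminus_0_r in Hclose. exact Hclose.
Qed.

End CauchyRiemannCircleMean.

(** * Vector algebra in R^3 *)

Ltac vec_ring := unfold dot, cross, vadd, vscal, mk3, v1, v2, v3; simpl; ring.

Lemma vec_ext (a b : V3) : v1 a = v1 b -> v2 a = v2 b -> v3 a = v3 b -> a = b.
Proof.
  destruct a as [[a1 a2] a3], b as [[b1 b2] b3]; unfold v1, v2, v3; simpl.
  now intros -> -> ->.
Qed.

Lemma dot_comm a b : dot a b = dot b a.
Proof. vec_ring. Qed.

Lemma dot_add_l x y z : dot (vadd x y) z = dot x z + dot y z.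
Proof. vec_ring. Qed.

Lemma dot_add_r x y z : dot z (vadd x y) = dot z x + dot z y.
Proof. vec_ring. Qed.

Lemma dot_scal_l k x z : dot (vscal k x) z = k * dot x z.
Proof. vec_ring. Qed.

Lemma dot_scal_r k x z : dot z (vscal k x) = k * dot z x.
Proof. vec_ring. Qed.

Ltac dot_expand := repeat rewrite ?dot_add_l, ?dot_add_r, ?dot_scal_l, ?dot_scal_r.

Lemma dot_cross_cross u v :
  dot (cross u v) (cross u v) = dot u u * dot v v - dot u v ^ 2.
Proof. vec_ring. Qed.

Lemma dot_cross_assoc u v w : dot (cross u v) w = dot u (cross v w).
Proof. vec_ring. Qed.

Lemma dot_cross_self_l u v : dot (cross u v) u = 0.
Proof. vec_ring. Qed.

Lemma cross_scal_r w g k : cross w (vscal k g) = vscal k (cross w g).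
Proof. apply vec_ext; simpl; unfold cross, vscal, mk3, v1, v2, v3; simpl; ring. Qed.

Lemma eq_of_dot_eq u w : dot u u = dot u w -> dot w w = dot u w -> u = w.
Proof.
  destruct u as [[u1 u2] u3], w as [[w1 w2] w3]; unfold dot, v1, v2, v3; simpl.
  intros Hu Hw.
  pose proof (Rle_0_sqr (u1 - w1)); pose proof (Rle_0_sqr (u2 - w2));
    pose proof (Rle_0_sqr (u3 - w3)); unfold Rsqr in *.
  assert (E1 : Rsqr (u1 - w1) = 0) by (unfold Rsqr; nra).
  assert (E2 : Rsqr (u2 - w2) = 0) by (unfold Rsqr; nra).
  assert (E3 : Rsqr (u3 - w3) = 0) by (unfold Rsqr; nra).
  apply Rsqr_0_uniq in E1, E2, E3.
  repeat f_equal; lra.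
Qed.

(* Expansion of w in the basis (a, b, n), whose dual basis is
   (b × n, n × a, a × b) / [a, b, n]. *)
Lemma cramer_dot a b n w z :
  dot (cross a b) n * dot w z =
  dot w (cross b n) * dot z a + dot w (cross n a) * dot z b + dot w (cross a b) * dot z n.
Proof. vec_ring. Qed.

Section OrthogonalFrame.
Variables (a b n : V3) (E : R).
Hypotheses (Ha : dot a a = E) (Hb : dot b b = E) (Hab : dot a b = 0)
  (Hn : dot n n = 1) (Hna : dot n a = 0) (Hnb : dot n b = 0).

Let D := dot (cross a b) n.

Lemma triple_product_sq : D * D = E * E.
Proof.
  assert (G : D * D =
    dot a a * dot b b * dot n n + 2 * dot a b * dot n b * dot n a - dot a a * dot n b ^ 2
    - dot b b * dot n a ^ 2 - dot n n * dot a b ^ 2) by (unfold D; vec_ring).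
  rewrite G, Ha, Hb, Hab, Hn, Hna, Hnb. ring.
Qed.

Lemma cross_frame_ab : cross a b = vscal D n.
Proof.
  pose proof triple_product_sq.
  apply eq_of_dot_eq; rewrite ?dot_scal_l, ?dot_scal_r, ?dot_cross_cross; fold D.
  - rewrite Ha, Hb, Hab, H. ring.
  - rewrite Hn. ring.
Qed.

Lemma cross_frame_bn : vscal E (cross b n) = vscal D a.
Proof.
  pose proof triple_product_sq.
  assert (HD : dot a (cross b n) = D) by (unfold D; vec_ring).
  apply eq_of_dot_eq; rewrite ?dot_scal_l, ?dot_scal_r, ?dot_cross_cross.
  - rewrite (dot_comm (cross b n) a), HD, Hb, Hn, (dot_comm b n), Hnb, H. ring.
  - rewrite (dot_comm (cross b n) a), HD, Ha. ring.
Qed.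

Lemma cross_frame_na : vscal E (cross n a) = vscal D b.
Proof.
  pose proof triple_product_sq.
  assert (HD : dot b (cross n a) = D) by (unfold D; vec_ring).
  apply eq_of_dot_eq; rewrite ?dot_scal_l, ?dot_scal_r, ?dot_cross_cross.
  - rewrite (dot_comm (cross n a) b), HD, Hn, Ha, Hna, H. ring.
  - rewrite (dot_comm (cross n a) b), HD, Hb. ring.
Qed.

Lemma frame_decomposition w z : 0 < E ->
  E * dot w z = dot w a * dot z a + dot w b * dot z b + E * dot w n * dot z n.
Proof.
  intros HE.
  assert (HD : D <> 0) by (intros HD0; pose proof triple_product_sq; rewrite HD0 in *; nra).
  apply Rmult_eq_reg_l with D; [|exact HD].
  pose proof (cramer_dot a b n w z) as C. fold D in C.
  transitivity (E * (D * dot w z)); [ring|]. rewrite C.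
  transitivity (dot w (vscal E (cross b n)) * dot z a + dot w (vscal E (cross n a)) * dot z b
                + E * dot w (cross a b) * dot z n); [rewrite !dot_scal_r; ring|].
  rewrite cross_frame_bn, cross_frame_na, cross_frame_ab, !dot_scal_r. ring.
Qed.

Lemma frame_decomposition_cross w g : 0 < E ->
  E * dot (cross w g) n = dot w a * dot (cross a g) n + dot w b * dot (cross b g) n
                          + E * dot w n * dot (cross n g) n.
Proof.
  intros HE. rewrite !dot_cross_assoc, (frame_decomposition w (cross g n) HE).
  rewrite !(dot_comm (cross g n)). ring.
Qed.

End OrthogonalFrame.

Lemma smooth3_on_pdx U F : smooth3_on U F -> smooth3_on U (pdx F).
Proof.
  intros [h1 [h2 h3]]. split; [|split]; apply (smooth_on_Dp U true); assumption.
Qed.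

Lemma smooth3_on_pdy U F : smooth3_on U F -> smooth3_on U (pdy F).
Proof.
  intros [h1 [h2 h3]]. split; [|split]; apply (smooth_on_Dp U false); assumption.
Qed.

Section SmoothVectorFields.
Variable U : R -> R -> Prop.
Hypothesis HU : open_set2 U.

Lemma differentiable_pt_lim_dot F G x y : smooth3_on U F -> smooth3_on U G -> U x y ->
  differentiable_pt_lim (fun u v => dot (F u v) (G u v)) x y
    (dot (pdx F x y) (G x y) + dot (F x y) (pdx G x y))
    (dot (pdy F x y) (G x y) + dot (F x y) (pdy G x y)).
Proof.
  intros [F1 [F2 F3]] [G1 [G2 G3]] Hxy. unfold dot.
  eapply differentiable_pt_lim_eq.
  - apply differentiable_pt_lim_plus; [apply differentiable_pt_lim_plus|];
      apply differentiable_pt_lim_mult; apply (smooth_on_differentiable U HU); assumption.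
  - unfold pdx, Dp, mk3, v1, v2, v3; simpl; ring.
  - unfold pdy, Dp, mk3, v1, v2, v3; simpl; ring.
Qed.

Lemma continuity_2d_pt_dot F G x y : smooth3_on U F -> smooth3_on U G -> U x y ->
  continuity_2d_pt (fun u v => dot (F u v) (G u v)) x y.
Proof.
  intros [F1 [F2 F3]] [G1 [G2 G3]] Hxy. unfold dot.
  apply continuity_2d_pt_plus; [apply continuity_2d_pt_plus|];
    apply continuity_2d_pt_mult; apply (smooth_on_continuity_2d U); assumption.
Qed.

Lemma pdx_pdy_comm F x y : smooth3_on U F -> U x y -> pdx (pdy F) x y = pdy (pdx F) x y.
Proof.
  intros [h1 [h2 h3]] Hxy.
  apply vec_ext; apply (smooth_on_Dp_comm U HU); assumption.
Qed.

Lemma pdy_ext_on F G x y : (forall u v, U u v -> F u v = G u v) -> U x y ->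
  pdy F x y = pdy G x y.
Proof.
  intros E Hxy.
  assert (L : locally y (fun t => U x t))
    by exact (locally_2d_1d_const_x U x y (open_set2_locally_2d U HU x y Hxy)).
  unfold pdy, mk3. f_equal; [f_equal|];
    apply Derive_ext_loc; eapply filter_imp; try exact L; intros t Ht; simpl; rewrite E; auto.
Qed.

End SmoothVectorFields.

(** * The Hopf differential of a conformal CMC immersion *)

Section ConformalCMC.
Variables (U : R -> R -> Prop) (f N : R -> R -> V3) (H : R).
Hypothesis HU : open_set2 U.
Hypothesis Hconf : conformal_immersion_on U f.
Hypothesis Hnor : unit_normal_on U f N.
Hypothesis Hcmc : has_constant_mean_curvature_on U f N H.

Lemma smooth3_f : smooth3_on U f.
Proof. exact (proj1 Hconf). Qed.

Lemma smooth3_N : smooth3_on U N.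
Proof. exact (proj1 Hnor). Qed.

Ltac smooth3 := repeat match goal with
  | |- smooth3_on _ (pdx _) => apply smooth3_on_pdx
  | |- smooth3_on _ (pdy _) => apply smooth3_on_pdy
  end; first [exact smooth3_f | exact smooth3_N].

Local Notation fx := (pdx f).
Local Notation fy := (pdy f).
Local Notation fxx := (pdx (pdx f)).
Local Notation fxy := (pdy (pdx f)).
Local Notation fyx := (pdx (pdy f)).
Local Notation fyy := (pdy (pdy f)).
Local Notation Nx := (pdx N).
Local Notation Ny := (pdy N).

Lemma cmc_equation x y : U x y ->
  dot (fxx x y) (N x y) + dot (fyy x y) (N x y) = 2 * H * dot (fx x y) (fx x y).
Proof.
  intros Hxy. pose proof (proj1 (proj2 (proj2 Hconf x y Hxy))) as HE.
  pose proof (Hcmc x y Hxy) as Hm. unfold mean_curvature in Hm. rewrite dot_add_l in Hm.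
  rewrite <- Hm. field. lra.
Qed.

Lemma dot_const_derivatives F G c x y :
  smooth3_on U F -> smooth3_on U G -> (forall u v, U u v -> dot (F u v) (G u v) = c) -> U x y ->
  dot (pdx F x y) (G x y) + dot (F x y) (pdx G x y) = 0 /\
  dot (pdy F x y) (G x y) + dot (F x y) (pdy G x y) = 0.
Proof.
  intros HF HG Hc Hxy.
  exact (differentiable_pt_lim_locally_const U HU _ c x y _ _ Hc Hxy
           (differentiable_pt_lim_dot U HU F G x y HF HG Hxy)).
Qed.

(* The Hopf differential is (u - i v) dz^2 with u, v as below. *)
Definition hopf_u x y := / 2 * (dot (fxx x y) (N x y) - dot (fyy x y) (N x y)).
Definition hopf_v x y := dot (fxy x y) (N x y).
Definition hopf_ux x y := / 2 * (dot (pdx fxx x y) (N x y) + dot (fxx x y) (Nx x y) -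
                                 (dot (pdx fyy x y) (N x y) + dot (fyy x y) (Nx x y))).
Definition hopf_uy x y := / 2 * (dot (pdy fxx x y) (N x y) + dot (fxx x y) (Ny x y) -
                                 (dot (pdy fyy x y) (N x y) + dot (fyy x y) (Ny x y))).
Definition hopf_vx x y := dot (pdx fxy x y) (N x y) + dot (fxy x y) (Nx x y).
Definition hopf_vy x y := dot (pdy fxy x y) (N x y) + dot (fxy x y) (Ny x y).

Section AtPoint.
Variables x y : R.
Hypothesis Hxy : U x y.

Lemma conformal_E_pos : 0 < dot (fx x y) (fx x y).
Proof. apply (proj2 Hconf x y Hxy). Qed.

Lemma conformal_E_eq : dot (fy x y) (fy x y) = dot (fx x y) (fx x y).
Proof. symmetry. apply (proj2 Hconf x y Hxy). Qed.

Lemma conformal_orthogonal : dot (fx x y) (fy x y) = 0.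
Proof. apply (proj2 Hconf x y Hxy). Qed.

Lemma normal_unit : dot (N x y) (N x y) = 1.
Proof. apply (proj2 Hnor x y Hxy). Qed.

Lemma normal_orthogonal_fx : dot (N x y) (fx x y) = 0.
Proof. apply (proj2 Hnor x y Hxy). Qed.

Lemma normal_orthogonal_fy : dot (N x y) (fy x y) = 0.
Proof. apply (proj2 Hnor x y Hxy). Qed.

Lemma frame_fx_fy_N w z : dot (fx x y) (fx x y) * dot w z =
  dot w (fx x y) * dot z (fx x y) + dot w (fy x y) * dot z (fy x y) +
  dot (fx x y) (fx x y) * dot w (N x y) * dot z (N x y).
Proof.
  apply frame_decomposition; auto using conformal_E_eq, conformal_orthogonal, normal_unit,
    normal_orthogonal_fx, normal_orthogonal_fy, conformal_E_pos.
Qed.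

Lemma normal_derivatives_tangent :
  dot (Nx x y) (N x y) = 0 /\ dot (Ny x y) (N x y) = 0.
Proof.
  destruct (dot_const_derivatives N N 1 x y smooth3_N smooth3_N
              (fun u v Huv => proj1 (proj2 Hnor u v Huv)) Hxy) as [a b].
  rewrite (dot_comm (N x y)) in a, b. lra.
Qed.

Lemma weingarten_fx :
  dot (Nx x y) (fx x y) = - dot (fxx x y) (N x y) /\
  dot (Ny x y) (fx x y) = - dot (fxy x y) (N x y).
Proof.
  destruct (dot_const_derivatives N fx 0 x y smooth3_N ltac:(smooth3)
              (fun u v Huv => proj1 (proj2 (proj2 Hnor u v Huv))) Hxy) as [a b].
  rewrite (dot_comm (N x y)) in a, b. lra.
Qed.

Lemma weingarten_fy :
  dot (Nx x y) (fy x y) = - dot (fyx x y) (N x y) /\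
  dot (Ny x y) (fy x y) = - dot (fyy x y) (N x y).
Proof.
  destruct (dot_const_derivatives N fy 0 x y smooth3_N ltac:(smooth3)
              (fun u v Huv => proj2 (proj2 (proj2 Hnor u v Huv))) Hxy) as [a b].
  rewrite (dot_comm (N x y)) in a, b. lra.
Qed.

Lemma conformal_E_eq_derivatives :
  dot (fxx x y) (fx x y) = dot (fyx x y) (fy x y) /\
  dot (fxy x y) (fx x y) = dot (fyy x y) (fy x y).
Proof.
  assert (sfx : smooth3_on U fx) by smooth3. assert (sfy : smooth3_on U fy) by smooth3.
  destruct (differentiable_pt_lim_locally_const U HU
     (fun u v => dot (fx u v) (fx u v) - dot (fy u v) (fy u v)) 0 x y _ _
     (fun u v Huv => ltac:(cbv beta; rewrite (proj1 (proj2 Hconf u v Huv)); ring)) Hxy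
     (differentiable_pt_lim_minus _ _ _ _ _ _ _ _
        (differentiable_pt_lim_dot U HU fx fx x y sfx sfx Hxy)
        (differentiable_pt_lim_dot U HU fy fy x y sfy sfy Hxy))) as [a b].
  rewrite (dot_comm (fx x y) (fxx x y)), (dot_comm (fy x y) (fyx x y)) in a.
  rewrite (dot_comm (fx x y) (fxy x y)), (dot_comm (fy x y) (fyy x y)) in b. lra.
Qed.

Lemma conformal_orthogonal_derivatives :
  dot (fxx x y) (fy x y) = - dot (fyx x y) (fx x y) /\
  dot (fxy x y) (fy x y) = - dot (fyy x y) (fx x y).
Proof.
  destruct (dot_const_derivatives fx fy 0 x y ltac:(smooth3) ltac:(smooth3)
              (fun u v Huv => proj2 (proj2 (proj2 Hconf u v Huv))) Hxy) as [a b].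
  rewrite (dot_comm (fx x y)) in a, b. lra.
Qed.

Lemma cmc_equation_derivatives :
  dot (pdx fxx x y) (N x y) + dot (fxx x y) (Nx x y)
    + dot (pdx fyy x y) (N x y) + dot (fyy x y) (Nx x y)
    = 4 * H * dot (fxx x y) (fx x y) /\
  dot (pdy fxx x y) (N x y) + dot (fxx x y) (Ny x y)
    + dot (pdy fyy x y) (N x y) + dot (fyy x y) (Ny x y)
    = 4 * H * dot (fxy x y) (fx x y).
Proof.
  assert (sfx : smooth3_on U fx) by smooth3. assert (sfxx : smooth3_on U fxx) by smooth3.
  assert (sfyy : smooth3_on U fyy) by smooth3.
  pose proof (differentiable_pt_lim_minus _ _ _ _ _ _ _ _
     (differentiable_pt_lim_plus _ _ _ _ _ _ _ _
        (differentiable_pt_lim_dot U HU fxx N x y sfxx smooth3_N Hxy)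
        (differentiable_pt_lim_dot U HU fyy N x y sfyy smooth3_N Hxy))
     (differentiable_pt_lim_scal (2 * H) _ _ _ _ _
        (differentiable_pt_lim_dot U HU fx fx x y sfx sfx Hxy))) as D.
  assert (Hc : forall u v, U u v -> dot (fxx u v) (N u v) + dot (fyy u v) (N u v)
                                    - 2 * H * dot (fx u v) (fx u v) = 0).
  { intros u v Huv. pose proof (cmc_equation u v Huv). lra. }
  destruct (differentiable_pt_lim_locally_const U HU _ 0 x y _ _ Hc Hxy D) as [a b].
  rewrite (dot_comm (fx x y) (fxx x y)) in a.
  rewrite (dot_comm (fx x y) (fxy x y)) in b. lra.
Qed.

Lemma fyx_eq_fxy : fyx x y = fxy x y.
Proof. apply (pdx_pdy_comm U HU f x y smooth3_f Hxy). Qed.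

Lemma fyyx_eq_fxyy : pdx fyy x y = pdy fxy x y.
Proof.
  rewrite (pdx_pdy_comm U HU fy x y) by (smooth3 || auto).
  apply (pdy_ext_on U HU); [|exact Hxy].
  intros u v Huv. apply (pdx_pdy_comm U HU f u v smooth3_f Huv).
Qed.

Lemma fxyx_eq_fxxy : pdx fxy x y = pdy fxx x y.
Proof. apply (pdx_pdy_comm U HU fx x y); [smooth3|auto]. Qed.

(* The Codazzi equations, in which the derivative of the CMC equation absorbs
   the trace part; the frame expansion supplies <f_yy, N_x> and <f_xy, N_y>. *)
Lemma hopf_cauchy_riemann_x : hopf_ux x y = - hopf_vy x y.
Proof.
  pose proof conformal_E_pos as HE.
  destruct normal_derivatives_tangent as [n1 n2].
  destruct weingarten_fx as [a1 a2]. destruct weingarten_fy as [b1 b2].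
  destruct conformal_E_eq_derivatives as [c1 c2].
  destruct conformal_orthogonal_derivatives as [d1 d2].
  destruct cmc_equation_derivatives as [e1 e2].
  pose proof (cmc_equation x y Hxy) as cm.
  rewrite fyx_eq_fxy in b1, c1. rewrite fyyx_eq_fxyy in e1.
  pose proof (frame_fx_fy_N (fyy x y) (Nx x y)) as fr1.
  pose proof (frame_fx_fy_N (fxy x y) (Ny x y)) as fr2.
  rewrite n1, a1, b1 in fr1. rewrite n2, a2, b2 in fr2.
  rewrite (dot_comm (fyy x y) (fx x y)), (dot_comm (fx x y) (fyy x y)) in fr1.
  rewrite (dot_comm (fyy x y) (fy x y)), (dot_comm (fy x y) (fyy x y)) in fr1.
  assert (k1 : dot (fyy x y) (fx x y) = - dot (fxx x y) (fx x y)) by lra.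
  assert (k2 : dot (fyy x y) (fy x y) = dot (fxy x y) (fx x y)) by lra.
  assert (k3 : dot (fxy x y) (fy x y) = dot (fxx x y) (fx x y)) by lra.
  rewrite k1, k2 in fr1. rewrite k3 in fr2.
  unfold hopf_ux, hopf_vy. rewrite fyyx_eq_fxyy.
  set (E := dot (fx x y) (fx x y)) in *.
  set (P := dot (fxx x y) (fx x y)) in *.
  set (T4 := dot (fyy x y) (Nx x y)) in *.
  set (T5 := dot (fxy x y) (Ny x y)) in *.
  apply Rmult_eq_reg_l with E; [|lra].
  replace (/ 2 * (dot (pdx fxx x y) (N x y) + dot (fxx x y) (Nx x y)
                  - (dot (pdy fxy x y) (N x y) + T4)))
    with (- (dot (pdy fxy x y) (N x y) + T5) + (2 * H * P - T4 + T5)) by lra.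
  rewrite Rmult_plus_distr_l.
  replace (E * (2 * H * P - T4 + T5)) with (P * (2 * H * E) - E * T4 + E * T5) by ring.
  rewrite fr1, fr2, <- cm. ring.
Qed.

Lemma hopf_cauchy_riemann_y : hopf_uy x y = hopf_vx x y.
Proof.
  pose proof conformal_E_pos as HE.
  destruct normal_derivatives_tangent as [n1 n2].
  destruct weingarten_fx as [a1 a2]. destruct weingarten_fy as [b1 b2].
  destruct conformal_E_eq_derivatives as [c1 c2].
  destruct conformal_orthogonal_derivatives as [d1 d2].
  destruct cmc_equation_derivatives as [e1 e2].
  pose proof (cmc_equation x y Hxy) as cm.
  rewrite fyx_eq_fxy in b1, c1, d1.
  pose proof (frame_fx_fy_N (fxx x y) (Ny x y)) as fr1.
  pose proof (frame_fx_fy_N (fxy x y) (Nx x y)) as fr2.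
  rewrite n2, a2, b2 in fr1. rewrite n1, a1, b1 in fr2.
  assert (k1 : dot (fxx x y) (fy x y) = - dot (fxy x y) (fx x y)) by lra.
  assert (k3 : dot (fxy x y) (fy x y) = dot (fxx x y) (fx x y)) by lra.
  rewrite k1 in fr1. rewrite k3 in fr2.
  unfold hopf_uy, hopf_vx. rewrite fxyx_eq_fxxy.
  set (E := dot (fx x y) (fx x y)) in *.
  set (Q := dot (fxy x y) (fx x y)) in *.
  set (T4 := dot (fxx x y) (Ny x y)) in *.
  set (T5 := dot (fxy x y) (Nx x y)) in *.
  apply Rmult_eq_reg_l with E; [|lra].
  replace (/ 2 * (dot (pdy fxx x y) (N x y) + T4
                  - (dot (pdy fyy x y) (N x y) + dot (fyy x y) (Ny x y))))
    with (dot (pdy fxx x y) (N x y) + T5 + (T4 - T5 - 2 * H * Q)) by lra.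
  rewrite Rmult_plus_distr_l.
  replace (E * (T4 - T5 - 2 * H * Q)) with (E * T4 - E * T5 - Q * (2 * H * E)) by ring.
  rewrite fr1, fr2, <- cm. ring.
Qed.

End AtPoint.

Lemma differentiable_pt_lim_hopf_u x y : U x y ->
  differentiable_pt_lim hopf_u x y (hopf_ux x y) (hopf_uy x y).
Proof.
  intros Hxy. unfold hopf_u, hopf_ux, hopf_uy.
  apply differentiable_pt_lim_scal, differentiable_pt_lim_minus;
    apply (differentiable_pt_lim_dot U HU); (smooth3 || auto).
Qed.

Lemma differentiable_pt_lim_hopf_v x y : U x y ->
  differentiable_pt_lim hopf_v x y (hopf_vx x y) (hopf_vy x y).
Proof.
  intros Hxy. apply (differentiable_pt_lim_dot U HU); (smooth3 || auto).
Qed.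

Ltac continuity_2d := repeat first [
  (apply (continuity_2d_pt_dot U); [smooth3|smooth3|auto]) |
  apply continuity_2d_pt_plus | apply continuity_2d_pt_minus | apply continuity_2d_pt_mult |
  apply continuity_2d_pt_opp | apply continuity_2d_pt_id1 | apply continuity_2d_pt_id2 |
  apply continuity_2d_pt_const ].

Lemma continuity_2d_hopf x y : U x y ->
  continuity_2d_pt hopf_u x y /\ continuity_2d_pt hopf_v x y /\
  continuity_2d_pt hopf_ux x y /\ continuity_2d_pt hopf_uy x y /\
  continuity_2d_pt hopf_vx x y /\ continuity_2d_pt hopf_vy x y.
Proof.
  intros Hxy. unfold hopf_u, hopf_v, hopf_ux, hopf_uy, hopf_vx, hopf_vy.
  repeat split; continuity_2d.
Qed.

(* hopf_re + i hopf_im = z^2 (u - i v). *)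
Definition hopf_re x y := (x * x - y * y) * hopf_u x y + 2 * x * y * hopf_v x y.
Definition hopf_im x y := 2 * x * y * hopf_u x y - (x * x - y * y) * hopf_v x y.
Definition hopf_re_x x y := 2 * x * hopf_u x y + (x * x - y * y) * hopf_ux x y
                            + 2 * y * hopf_v x y + 2 * x * y * hopf_vx x y.
Definition hopf_re_y x y := - 2 * y * hopf_u x y + (x * x - y * y) * hopf_uy x y
                            + 2 * x * hopf_v x y + 2 * x * y * hopf_vy x y.

Lemma differentiable_pt_lim_z2_re x y :
  differentiable_pt_lim (fun u v => u * u - v * v) x y (2 * x) (- 2 * y).
Proof.
  eapply differentiable_pt_lim_eq;
    [apply differentiable_pt_lim_minus; apply differentiable_pt_lim_mult;
     first [apply differentiable_pt_lim_id1 | apply differentiable_pt_lim_id2]| |];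
    cbv beta; ring.
Qed.

Lemma differentiable_pt_lim_z2_im x y :
  differentiable_pt_lim (fun u v => 2 * u * v) x y (2 * y) (2 * x).
Proof.
  eapply differentiable_pt_lim_eq;
    [apply differentiable_pt_lim_mult;
     [apply differentiable_pt_lim_scal, differentiable_pt_lim_id1
     |apply differentiable_pt_lim_id2]| |];
    cbv beta; ring.
Qed.

Lemma differentiable_pt_lim_hopf_re x y : U x y ->
  differentiable_pt_lim hopf_re x y (hopf_re_x x y) (hopf_re_y x y).
Proof.
  intros Hxy. unfold hopf_re, hopf_re_x, hopf_re_y.
  eapply differentiable_pt_lim_eq;
    [apply differentiable_pt_lim_plus; apply differentiable_pt_lim_mult;
     [apply differentiable_pt_lim_z2_re | apply differentiable_pt_lim_hopf_u; auto
     |apply differentiable_pt_lim_z2_im | apply differentiable_pt_lim_hopf_v; auto]| |];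
    cbv beta; ring.
Qed.

Lemma differentiable_pt_lim_hopf_im x y : U x y ->
  differentiable_pt_lim hopf_im x y (- hopf_re_y x y) (hopf_re_x x y).
Proof.
  intros Hxy. unfold hopf_im, hopf_re_x, hopf_re_y.
  rewrite (hopf_cauchy_riemann_x x y Hxy), (hopf_cauchy_riemann_y x y Hxy).
  eapply differentiable_pt_lim_eq;
    [apply differentiable_pt_lim_minus; apply differentiable_pt_lim_mult;
     [apply differentiable_pt_lim_z2_im | apply differentiable_pt_lim_hopf_u; auto
     |apply differentiable_pt_lim_z2_re | apply differentiable_pt_lim_hopf_v; auto]| |];
    cbv beta; rewrite ?(hopf_cauchy_riemann_x x y Hxy), ?(hopf_cauchy_riemann_y x y Hxy); ring.
Qed.

Lemma continuity_2d_hopf_z2 x y : U x y ->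
  continuity_2d_pt hopf_re x y /\ continuity_2d_pt hopf_im x y /\
  continuity_2d_pt hopf_re_x x y /\ continuity_2d_pt hopf_re_y x y.
Proof.
  intros Hxy. destruct (continuity_2d_hopf x y Hxy) as (? & ? & ? & ? & ? & ?).
  unfold hopf_re, hopf_im, hopf_re_x, hopf_re_y. repeat split; continuity_2d; assumption.
Qed.

Hypothesis Hdisc : contains_closed_disc U.

Lemma RInt_hopf_re_circle : RInt (fun t => hopf_re (cos t) (sin t)) 0 (2 * PI) = 0.
Proof.
  apply (RInt_circle_cauchy_riemann hopf_re hopf_re_x hopf_re_y hopf_im);
    try (intros x y Hxy; assert (Hu : U x y) by (apply Hdisc; lra)).
  - apply differentiable_pt_lim_hopf_re, Hu.
  - apply differentiable_pt_lim_hopf_im, Hu.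
  - apply continuity_2d_hopf_z2, Hu.
  - apply continuity_2d_hopf_z2, Hu.
  - apply continuity_2d_hopf_z2, Hu.
  - unfold hopf_re. ring.
Qed.

Lemma RInt_hopf_im_circle : RInt (fun t => hopf_im (cos t) (sin t)) 0 (2 * PI) = 0.
Proof.
  apply (RInt_circle_cauchy_riemann hopf_im (fun x y => - hopf_re_y x y) hopf_re_x
           (fun x y => - hopf_re x y));
    try (intros x y Hxy; assert (Hu : U x y) by (apply Hdisc; lra)).
  - apply differentiable_pt_lim_hopf_im, Hu.
  - apply differentiable_pt_lim_opp, differentiable_pt_lim_hopf_re, Hu.
  - apply continuity_2d_hopf_z2, Hu.
  - apply continuity_2d_pt_opp, continuity_2d_hopf_z2, Hu.
  - apply continuity_2d_hopf_z2, Hu.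
  - unfold hopf_im. ring.
Qed.

End ConformalCMC.

(** * Curves in R^3 and the boundary circle *)

Definition is_derive3 (c : R -> V3) (t : R) (d : V3) : Prop :=
  is_derive (fun s => v1 (c s)) t (v1 d) /\ is_derive (fun s => v2 (c s)) t (v2 d) /\
  is_derive (fun s => v3 (c s)) t (v3 d).

Lemma is_derive3_dV c t d : is_derive3 c t d -> dV c t = d.
Proof.
  intros [h1 [h2 h3]]. apply vec_ext; apply is_derive_unique; assumption.
Qed.

Lemma is_derive3_eq c t d d' : is_derive3 c t d -> d = d' -> is_derive3 c t d'.
Proof. now intros Hc <-. Qed.

Lemma is_derive_eq (g : R -> R) t l l' : is_derive g t l -> l = l' -> is_derive g t l'.
Proof. now intros Hg <-. Qed.

Lemma is_derive_Rmult (k h : R -> R) t k' h' : is_derive k t k' -> is_derive h t h' ->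
  is_derive (fun s => k s * h s) t (k' * h t + k t * h').
Proof. intros Hk Hh. exact (is_derive_mult k h t k' h' Hk Hh Rmult_comm). Qed.

Lemma is_derive3_vadd a b t a' b' : is_derive3 a t a' -> is_derive3 b t b' ->
  is_derive3 (fun s => vadd (a s) (b s)) t (vadd a' b').
Proof.
  intros [a1 [a2 a3]] [b1 [b2 b3]].
  split; [|split]; apply (is_derive_plus (K := R_AbsRing) (V := R_NormedModule)); assumption.
Qed.

Lemma is_derive3_vscal k a t k' a' : is_derive k t k' -> is_derive3 a t a' ->
  is_derive3 (fun s => vscal (k s) (a s)) t (vadd (vscal k' (a t)) (vscal (k t) a')).
Proof.
  intros Hk [a1 [a2 a3]]. split; [|split]; apply is_derive_Rmult; assumption.
Qed.

Lemma is_derive_dot a b t a' b' : is_derive3 a t a' -> is_derive3 b t b' ->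
  is_derive (fun s => dot (a s) (b s)) t (dot a' (b t) + dot (a t) b').
Proof.
  intros [a1 [a2 a3]] [b1 [b2 b3]].
  replace (dot a' (b t) + dot (a t) b') with
    ((v1 a' * v1 (b t) + v1 (a t) * v1 b') + (v2 a' * v2 (b t) + v2 (a t) * v2 b')
     + (v3 a' * v3 (b t) + v3 (a t) * v3 b')) by (unfold dot; ring).
  unfold dot.
  apply (is_derive_plus (K := R_AbsRing) (V := R_NormedModule));
    [apply (is_derive_plus (K := R_AbsRing) (V := R_NormedModule))|];
    apply is_derive_Rmult; assumption.
Qed.

Lemma is_derive3_cross a b t a' b' : is_derive3 a t a' -> is_derive3 b t b' ->
  is_derive3 (fun s => cross (a s) (b s)) t (vadd (cross a' (b t)) (cross (a t) b')).
Proof.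
  intros [a1 [a2 a3]] [b1 [b2 b3]]. split; [|split]; eapply is_derive_eq.
  - exact (is_derive_minus _ _ t _ _ (is_derive_Rmult _ _ t _ _ a2 b3)
                                     (is_derive_Rmult _ _ t _ _ a3 b2)).
  - unfold minus, plus, opp; simpl. vec_ring.
  - exact (is_derive_minus _ _ t _ _ (is_derive_Rmult _ _ t _ _ a3 b1)
                                     (is_derive_Rmult _ _ t _ _ a1 b3)).
  - unfold minus, plus, opp; simpl. vec_ring.
  - exact (is_derive_minus _ _ t _ _ (is_derive_Rmult _ _ t _ _ a1 b2)
                                     (is_derive_Rmult _ _ t _ _ a2 b1)).
  - unfold minus, plus, opp; simpl. vec_ring.
Qed.

Definition circle_derivative (F : R -> R -> V3) (t : R) : V3 :=
  vadd (vscal (- sin t) (pdx F (cos t) (sin t))) (vscal (cos t) (pdy F (cos t) (sin t))).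

Lemma is_derive3_circle U F t : open_set2 U -> smooth3_on U F -> U (cos t) (sin t) ->
  is_derive3 (fun s => F (cos s) (sin s)) t (circle_derivative F t).
Proof.
  intros HU [h1 [h2 h3]] Hc.
  assert (Hcos : is_derive cos t (- sin t)) by (auto_derive; auto; ring).
  assert (Hsin : is_derive sin t (cos t)) by (auto_derive; auto; ring).
  split; [|split];
    match goal with |- is_derive (fun s => ?g (F (cos s) (sin s))) _ _ =>
      replace (g (circle_derivative F t))
        with (Dp true (fun x y => g (F x y)) (cos t) (sin t) * (- sin t)
              + Dp false (fun x y => g (F x y)) (cos t) (sin t) * cos t)
        by (unfold circle_derivative, Dp, pdx, pdy, vadd, vscal, mk3, v1, v2, v3; simpl; ring)
    end;
    apply (smooth_on_is_derive_comp U HU); assumption.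
Qed.

Lemma dot_cross_combination_l a b n p q :
  dot (cross a (vadd (vscal p a) (vscal q b))) n = q * dot (cross a b) n.
Proof. vec_ring. Qed.

Lemma dot_cross_combination_r a b n p q :
  dot (cross b (vadd (vscal p a) (vscal q b))) n = - p * dot (cross a b) n.
Proof. vec_ring. Qed.

Lemma ex_derive_inv_sqrt (h : R -> R) t :
  ex_derive h t -> 0 < h t -> ex_derive (fun s => / sqrt (h s)) t.
Proof.
  intros Hh Hpos. auto_derive. repeat split; auto.
  apply Rgt_not_eq, sqrt_lt_R0, Hpos.
Qed.

Section BoundaryCurve.
Variables (U : R -> R -> Prop) (f N : R -> R -> V3) (H : R).
Hypothesis HU : open_set2 U.
Hypothesis Hdisc : contains_closed_disc U.
Hypothesis Hconf : conformal_immersion_on U f.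
Hypothesis Hnor : unit_normal_on U f N.
Hypothesis Hcmc : has_constant_mean_curvature_on U f N H.

Ltac smooth3 := repeat match goal with
  | |- smooth3_on _ (pdx _) => apply smooth3_on_pdx
  | |- smooth3_on _ (pdy _) => apply smooth3_on_pdy
  end; first [exact (smooth3_f U f Hconf) | exact (smooth3_N U f N Hnor)].

Local Notation fx t := (pdx f (cos t) (sin t)).
Local Notation fy t := (pdy f (cos t) (sin t)).
Local Notation Nb t := (N (cos t) (sin t)).
Local Notation E t := (dot (fx t) (fx t)).

Lemma cos_sin_sq t : cos t * cos t + sin t * sin t = 1.
Proof. pose proof (sin2_cos2 t). unfold Rsqr in *. lra. Qed.

Lemma circle_in_U t : U (cos t) (sin t).
Proof. apply Hdisc. pose proof (cos_sin_sq t). lra. Qed.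

Lemma E_circle_pos t : 0 < E t.
Proof. apply (conformal_E_pos U f Hconf), circle_in_U. Qed.

Definition curve_acceleration t : V3 :=
  vadd (vadd (vscal (- cos t) (fx t)) (vscal (- sin t) (circle_derivative (pdx f) t)))
       (vadd (vscal (- sin t) (fy t)) (vscal (cos t) (circle_derivative (pdy f) t))).

Lemma dV_bcurve t : dV (bcurve f) t = circle_derivative f t.
Proof. apply is_derive3_dV, (is_derive3_circle U); [auto|smooth3|apply circle_in_U]. Qed.

Lemma is_derive3_velocity t : is_derive3 (circle_derivative f) t (curve_acceleration t).
Proof.
  unfold circle_derivative at 1. eapply is_derive3_eq.
  - apply is_derive3_vadd; apply is_derive3_vscal;
      [ | apply (is_derive3_circle U (pdx f)) | | apply (is_derive3_circle U (pdy f)) ];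
      try (auto_derive; auto; ring); auto; try smooth3; apply circle_in_U.
  - unfold curve_acceleration. f_equal; f_equal; f_equal; ring.
Qed.

Lemma is_derive3_bnormal t : is_derive3 (bnormal N) t (circle_derivative N t).
Proof. apply (is_derive3_circle U); [auto|smooth3|apply circle_in_U]. Qed.

Lemma dot_velocity t : dot (circle_derivative f t) (circle_derivative f t) = E t.
Proof.
  pose proof (circle_in_U t) as Hc.
  unfold circle_derivative. dot_expand.
  rewrite (dot_comm (fy t) (fx t)), (conformal_orthogonal U f Hconf _ _ Hc),
    (conformal_E_eq U f Hconf _ _ Hc).
  transitivity (E t * (cos t * cos t + sin t * sin t)); [ring|rewrite cos_sin_sq; ring].
Qed.

Lemma dsdt_circle t : dsdt f t = sqrt (E t).
Proof. unfold dsdt, vnorm. rewrite dV_bcurve, dot_velocity. reflexivity. Qed.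

Lemma dsdt_sq t : dsdt f t ^ 2 = E t.
Proof. rewrite dsdt_circle. apply pow2_sqrt, Rlt_le, E_circle_pos. Qed.

Lemma tangentX_circle :
  tangentX f = fun t => vscal (/ sqrt (E t)) (circle_derivative f t).
Proof.
  apply functional_extensionality. intros t. unfold tangentX. rewrite dsdt_circle, dV_bcurve.
  reflexivity.
Qed.

Lemma is_derive3_tangentX t : is_derive3 (tangentX f) t
  (vadd (vscal (Derive (fun s => / sqrt (E s)) t) (circle_derivative f t))
        (vscal (/ sqrt (E t)) (curve_acceleration t))).
Proof.
  rewrite tangentX_circle.
  apply (is_derive3_vscal (fun s => / sqrt (E s)) (circle_derivative f));
    [|apply is_derive3_velocity].
  apply Derive_correct, ex_derive_inv_sqrt; [|apply E_circle_pos].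
  eexists. apply is_derive_dot; apply (is_derive3_circle U (pdx f));
    [auto|smooth3|apply circle_in_U|auto|smooth3|apply circle_in_U].
Qed.

Lemma velocity_normal t : dot (circle_derivative f t) (Nb t) = 0.
Proof.
  pose proof (circle_in_U t) as Hc. unfold circle_derivative. dot_expand.
  rewrite !(dot_comm _ (Nb t)), (normal_orthogonal_fx U f N Hnor _ _ Hc),
    (normal_orthogonal_fy U f N Hnor _ _ Hc). ring.
Qed.

Lemma acceleration_normal t : dot (curve_acceleration t) (Nb t) =
  sin t * sin t * dot (pdx (pdx f) (cos t) (sin t)) (Nb t)
  - 2 * sin t * cos t * dot (pdy (pdx f) (cos t) (sin t)) (Nb t)
  + cos t * cos t * dot (pdy (pdy f) (cos t) (sin t)) (Nb t).
Proof.
  pose proof (circle_in_U t) as Hc.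
  unfold curve_acceleration, circle_derivative. dot_expand.
  rewrite !(dot_comm (fx t)), !(dot_comm (fy t)), (normal_orthogonal_fx U f N Hnor _ _ Hc),
    (normal_orthogonal_fy U f N Hnor _ _ Hc), (fyx_eq_fxy U f HU Hconf _ _ Hc). ring.
Qed.

Lemma normal_curvature_identity t :
  (H - normal_curvature f N t) * dsdt f t ^ 2 = hopf_re f N (cos t) (sin t).
Proof.
  unfold normal_curvature. rewrite (is_derive3_dV _ _ _ (is_derive3_tangentX t)), dsdt_circle.
  unfold bnormal. dot_expand. rewrite velocity_normal, acceleration_normal.
  pose proof (E_circle_pos t) as HE.
  pose proof (cmc_equation U f N H Hconf Hcmc _ _ (circle_in_U t)) as cm.
  pose proof (cos_sin_sq t) as cs.
  unfold hopf_re, hopf_u, hopf_v.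
  set (C := cos t) in *. set (S := sin t) in *.
  set (E := dot (pdx f C S) (pdx f C S)) in *.
  assert (Hr : 0 < sqrt E) by (apply sqrt_lt_R0; lra).
  assert (Hrr : sqrt E * sqrt E = E) by (apply sqrt_sqrt; lra).
  set (L := dot (pdx (pdx f) C S) (N C S)) in *.
  set (M := dot (pdy (pdx f) C S) (N C S)) in *.
  set (Nn := dot (pdy (pdy f) C S) (N C S)) in *.
  set (k' := Derive _ t).
  replace ((H - / sqrt E * (k' * 0 + / sqrt E * (S * S * L - 2 * S * C * M + C * C * Nn)))
           * sqrt E ^ 2)
    with (H * (sqrt E * sqrt E) - (S * S * L - 2 * S * C * M + C * C * Nn))
    by (field; lra).
  rewrite Hrr.
  replace (H * E) with ((L + Nn) / 2 * (C * C + S * S)) by (rewrite cs; lra).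
  field.
Qed.

Definition orientation x y :=
  dot (cross (pdx f x y) (pdy f x y)) (N x y) / dot (pdx f x y) (pdx f x y).

Lemma geodesic_torsion_identity t :
  geodesic_torsion f N t * dsdt f t ^ 2 = orientation (cos t) (sin t) * hopf_im f N (cos t) (sin t).
Proof.
  pose proof (circle_in_U t) as Hc. pose proof (E_circle_pos t) as HE.
  unfold geodesic_torsion, conormalY.
  rewrite (is_derive3_dV _ _ _ (is_derive3_cross _ _ _ _ _ (is_derive3_bnormal t)
                                  (is_derive3_tangentX t))), dsdt_circle.
  unfold bnormal. rewrite dot_add_l, dot_cross_self_l, tangentX_circle, cross_scal_r, dot_scal_l.
  set (T := dot (cross (circle_derivative N t) (circle_derivative f t)) (Nb t)).
  pose proof (frame_decomposition_cross (fx t) (fy t) (Nb t) (E t) eq_refl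
    (conformal_E_eq U f Hconf _ _ Hc) (conformal_orthogonal U f Hconf _ _ Hc)
    (normal_unit U f N Hnor _ _ Hc) (normal_orthogonal_fx U f N Hnor _ _ Hc)
    (normal_orthogonal_fy U f N Hnor _ _ Hc) (circle_derivative N t) (circle_derivative f t) HE)
    as FC.
  fold T in FC. unfold circle_derivative in FC.
  rewrite dot_cross_combination_l, dot_cross_combination_r, dot_cross_self_l,
    !dot_add_l, !dot_scal_l in FC.
  destruct (weingarten_fx U f N HU Hconf Hnor _ _ Hc) as [a1 a2].
  destruct (weingarten_fy U f N HU Hconf Hnor _ _ Hc) as [b1 b2].
  rewrite (fyx_eq_fxy U f HU Hconf _ _ Hc) in b1.
  rewrite a1, a2, b1, b2 in FC.
  assert (Hr : 0 < sqrt (E t)) by (apply sqrt_lt_R0; lra).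
  replace (/ sqrt (E t) * (/ sqrt (E t) * T + 0) * sqrt (E t) ^ 2) with T by (field; lra).
  unfold orientation, hopf_im, hopf_u, hopf_v.
  apply Rmult_eq_reg_l with (E t); [|lra].
  rewrite FC. field. lra.
Qed.

Lemma continuous_circle (g : R -> R -> R) t :
  (forall x y, U x y -> continuity_2d_pt g x y) -> continuous (fun s => g (cos s) (sin s)) t.
Proof.
  intros Hg. apply (continuous_comp_continuity_2d g cos sin); [apply Hg, circle_in_U| |];
    apply (ex_derive_continuous (K := R_AbsRing) (V := R_NormedModule)); auto_derive; auto.
Qed.

Lemma ex_RInt_circle (g : R -> R -> R) :
  (forall x y, U x y -> continuity_2d_pt g x y) ->
  ex_RInt (fun s => g (cos s) (sin s)) 0 (2 * PI).
Proof.
  intros Hg. apply (ex_RInt_continuous (V := R_CompleteNormedModule)).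
  intros t _. apply continuous_circle, Hg.
Qed.

Lemma continuity_2d_E x y : U x y -> continuity_2d_pt (fun x y => dot (pdx f x y) (pdx f x y)) x y.
Proof. intros Hxy. apply (continuity_2d_pt_dot U); [smooth3|smooth3|auto]. Qed.

Lemma continuity_2d_orientation x y : U x y -> continuity_2d_pt orientation x y.
Proof.
  intros Hxy.
  destruct (smooth3_on_pdx U f (smooth3_f U f Hconf)) as [fx1 [fx2 fx3]].
  destruct (smooth3_on_pdy U f (smooth3_f U f Hconf)) as [fy1 [fy2 fy3]].
  destruct (smooth3_N U f N Hnor) as [N1 [N2 N3]].
  apply continuity_2d_pt_mult.
  - apply continuity_2d_pt_ext with (fun x y =>
      (v2 (pdx f x y) * v3 (pdy f x y) - v3 (pdx f x y) * v2 (pdy f x y)) * v1 (N x y) +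
      (v3 (pdx f x y) * v1 (pdy f x y) - v1 (pdx f x y) * v3 (pdy f x y)) * v2 (N x y) +
      (v1 (pdx f x y) * v2 (pdy f x y) - v2 (pdx f x y) * v1 (pdy f x y)) * v3 (N x y));
      [reflexivity|].
    repeat first [ apply continuity_2d_pt_plus | apply continuity_2d_pt_minus
                 | apply continuity_2d_pt_mult | apply continuity_2d_pt_opp ];
      apply (smooth_on_continuity_2d U); assumption.
  - apply continuity_2d_pt_inv; [apply continuity_2d_E, Hxy|].
    apply Rgt_not_eq, (conformal_E_pos U f Hconf), Hxy.
Qed.

Lemma orientation_sq t : orientation (cos t) (sin t) * orientation (cos t) (sin t) = 1.
Proof.
  pose proof (circle_in_U t) as Hc. pose proof (E_circle_pos t) as HE.
  pose proof (triple_product_sq (fx t) (fy t) (Nb t) (E t) eq_refl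
    (conformal_E_eq U f Hconf _ _ Hc) (conformal_orthogonal U f Hconf _ _ Hc)
    (normal_unit U f N Hnor _ _ Hc) (normal_orthogonal_fx U f N Hnor _ _ Hc)
    (normal_orthogonal_fy U f N Hnor _ _ Hc)) as G.
  unfold orientation. set (D := dot (cross _ _) _) in *.
  replace (D / E t * (D / E t)) with (D * D / (E t * E t)) by (field; lra).
  rewrite G. field. lra.
Qed.

(* The sign of [f_x × f_y] against [N] is ±1 and continuous along the circle. *)
Lemma orientation_circle_constant t :
  orientation (cos t) (sin t) = orientation (cos 0) (sin 0).
Proof.
  set (o s := orientation (cos s) (sin s)).
  assert (Ho : forall s, o s = 1 \/ o s = -1).
  { intros s. pose proof (orientation_sq s) as Hs. change (o s * o s = 1) in Hs.
    assert (Hf : (o s - 1) * (o s + 1) = 0) by nra.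
    apply Rmult_integral in Hf. lra. }
  destruct (Req_dec (o t) (o 0)) as [|Hne]; [assumption|exfalso].
  destruct (IVT_gen_consistent o 0 t 0) as [z [_ Hz]].
  - intros s. apply continuous_circle, continuity_2d_orientation.
  - destruct (Ho t) as [Ht | Ht], (Ho 0) as [H0 | H0]; rewrite Ht, H0 in *; try lra;
      unfold Rmin, Rmax; repeat destruct Rle_dec; lra.
  - pose proof (orientation_sq z) as Hs. change (o z * o z = 1) in Hs. rewrite Hz in Hs. lra.
Qed.

Lemma RInt_normal_curvature_defect :
  RInt (fun t => (H - normal_curvature f N t) * (dsdt f t) ^ 2) 0 (2 * PI) = 0.
Proof.
  rewrite (RInt_ext _ (fun t => hopf_re f N (cos t) (sin t))).
  - apply (RInt_hopf_re_circle U f N H); assumption.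
  - intros t _. apply normal_curvature_identity.
Qed.

Lemma RInt_geodesic_torsion :
  RInt (fun t => geodesic_torsion f N t * (dsdt f t) ^ 2) 0 (2 * PI) = 0.
Proof.
  rewrite (RInt_ext _ (fun t => scal (orientation (cos 0) (sin 0)) (hopf_im f N (cos t) (sin t)))).
  - rewrite (RInt_scal (V := R_CompleteNormedModule)).
    + rewrite (RInt_hopf_im_circle U f N H) by assumption.
      apply (scal_zero_r (K := R_AbsRing) (V := R_NormedModule)).
    + apply ex_RInt_circle. intros x y Hxy.
      eapply continuity_2d_hopf_z2; eassumption.
  - intros t _. rewrite geodesic_torsion_identity, orientation_circle_constant. reflexivity.
Qed.

Lemma RInt_dsdt_sq_pos : 0 < RInt (fun t => (dsdt f t) ^ 2) 0 (2 * PI).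
Proof.
  rewrite (RInt_ext _ (fun t => E t)) by (intros t _; apply dsdt_sq).
  apply RInt_gt_0; [pose proof PI_RGT_0; lra| |].
  - intros t _. apply E_circle_pos.
  - intros t _. apply (continuous_circle (fun x y => dot (pdx f x y) (pdx f x y))).
    apply continuity_2d_E.
Qed.

Lemma mean_curvature_average :
  H = / RInt (fun t => (dsdt f t) ^ 2) 0 (2 * PI) *
      RInt (fun t => normal_curvature f N t * (dsdt f t) ^ 2) 0 (2 * PI).
Proof.
  pose proof RInt_dsdt_sq_pos as HM.
  assert (HEint : ex_RInt (fun t => E t) 0 (2 * PI))
    by exact (ex_RInt_circle (fun x y => dot (pdx f x y) (pdx f x y)) continuity_2d_E).
  assert (Hre : ex_RInt (fun t => hopf_re f N (cos t) (sin t)) 0 (2 * PI)).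
  { apply ex_RInt_circle. intros x y Hxy. eapply continuity_2d_hopf_z2; eassumption. }
  rewrite (RInt_ext (fun t => dsdt f t ^ 2) (fun t => E t)) in * by (intros; apply dsdt_sq).
  rewrite (RInt_ext (fun t => normal_curvature f N t * dsdt f t ^ 2)
                    (fun t => minus (scal H (E t)) (hopf_re f N (cos t) (sin t)))).
  - rewrite (RInt_minus (V := R_CompleteNormedModule));
      [|apply (ex_RInt_scal (V := R_CompleteNormedModule)), HEint | exact Hre].
    rewrite (RInt_scal (V := R_CompleteNormedModule)) by exact HEint.
    rewrite (RInt_hopf_re_circle U f N H) by assumption.
    unfold minus, plus, opp, scal; simpl; unfold mult; simpl.
    match goal with |- ?A = ?B => change (@eq R A B) end. field. lra.
  - intros t _. rewrite <- normal_curvature_identity, dsdt_sq.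
    unfold minus, plus, opp, scal; simpl; unfold mult; simpl. ring.
Qed.

End BoundaryCurve.

Theorem mainTheorem2 (H : R) (U : R -> R -> Prop) (f N : R -> R -> V3) :
  open_set2 U ->
  contains_closed_disc U ->
  conformal_immersion_on U f ->
  unit_normal_on U f N ->
  has_constant_mean_curvature_on U f N H ->
  regular_analytic_curve (bcurve f) ->
  RInt (fun t => (H - normal_curvature f N t) * (dsdt f t) ^ 2) 0 (2 * PI) = 0 /\
  RInt (fun t => geodesic_torsion f N t * (dsdt f t) ^ 2) 0 (2 * PI) = 0 /\
  H = / RInt (fun t => (dsdt f t) ^ 2) 0 (2 * PI) *
      RInt (fun t => normal_curvature f N t * (dsdt f t) ^ 2) 0 (2 * PI).
Proof.
  intros HU Hdisc Hconf Hnor Hcmc _.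
  split; [|split].
  - exact (RInt_normal_curvature_defect U f N H HU Hdisc Hconf Hnor Hcmc).
  - exact (RInt_geodesic_torsion U f N H HU Hdisc Hconf Hnor Hcmc).
  - exact (mean_curvature_average U f N H HU Hdisc Hconf Hnor Hcmc).
Qed.
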